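(* Let $\mathcal{R}$ be a set of standard nominal rewrite rules and let $\mathcal{R}'$ be the CRS consisting of the rules $\mathcal{T}(\nabla,l)\Rightarrow\mathcal{T}(\nabla,r)$ for $\nabla\vdash l\to r$ in $\mathcal{R}$. If $\mathcal{R}'$ is terminating, then the nominal rewriting relation of $\mathcal{R}$ on ground nominal terms (in the empty freshness context) is terminating.
   Context: Nominal terms over signature $\Sigma$, atoms $\mathcal{A}$, variables $\mathcal{X}$: $s,t ::= a \mid \pi\cdot X \mid [a]s \mid f\,s \mid (s_1,\ldots,s_n)$ with $\pi$ finite-support permutations of atoms acting on terms in the usual nominal way; freshness contexts $\Delta$ are sets of constraints $a\#X$; freshness and $\alpha$-equivalence judgements are the standard nominal ones. Ground terms contain no variables. A term-in-context $\Delta\vdash t$ is closed if: (1) every atom occurrence $a$ is under an abstraction $[a]$; (2) if $\pi\cdot X$ is in the scope of an abstraction of $\pi(a)$ then every occurrence $\pi'\cdot X$ is in the scope of an abstraction of $\pi'(a)$, or $a\#X\in\Delta$; (3) for two occurrences $\pi_1\cdot X,\pi_2\cdot X$ and $a$ with $\pi_1(a)\neq\pi_2(a)$, if $a$ is not abstracted in one of the occurrences then $a\#X\in\Delta$. A standard nominal rule is a rule $\nabla\vdash l\to r$ (variables of $r$ and $\nabla$ among those of $l$) such that $\nabla\vdash(l,r)$ is closed and $l$ has the form $f\,s$. Nominal rewriting $s\to_R t$: $s=C[s']$, and there is a substitution $\theta$ (capture-permitting, $(\pi\cdot X)\theta=\pi\cdot(X\theta)$) with $\vdash a\#X\theta$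 for $a\#X\in\nabla$, $\vdash l\theta\approx_\alpha s'$, $\vdash C[r\theta]\approx_\alpha t$; rule sets are closed under permutations. CRSs: meta-terms $a\mid Z(t_1,\ldots,t_n)\mid[a]t\mid f\,t\mid(t_1,\ldots,t_n)$ modulo bound-variable renaming, rules $l\Rightarrow r$, valuations assigning substitutes $\underline{\lambda}(a_1,\dots,a_n).s$ to meta-variables, rewrite steps $C[\sigma(l)]\Rightarrow C[\sigma(r)]$ on terms. Translation: $\Lambda_t(X)$ is the set of atoms abstracted above some occurrence of $X$ in $t$; with a fixed total order on atoms, $\mathcal{T}(\Delta,t)$ replaces each $\pi\cdot X$ in $t$ by $X(\pi\cdot xs)$, where $xs$ is the ascending list of $\{\pi^{-1}(a)\mid a\in\Lambda_t(X)\}\setminus\{a\mid a\#X\in\Delta\}$, and leaves all other constructs unchanged (atoms become CRS variables, variables become meta-variables). *)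

From Stdlib Require Import List Arith Bool.
Import ListNotations.

Definition atom := nat.
Definition var := nat.
Definition fsym := nat.

Definition swap (a b c : atom) : atom :=
  if Nat.eqb c a then b else if Nat.eqb c b then a else c.

(* A finite-support permutation is a list of swappings;
   act [(a1,b1);...;(an,bn)] c = (a1 b1)((a2 b2)(...((an bn) c))).
   Composition is list concatenation, inverse is reversal. *)
Definition perm := list (atom * atom).

Definition act (p : perm) (c : atom) : atom :=
  fold_right (fun ab c => swap (fst ab) (snd ab) c) c p.

Definition perm_inv (p : perm) : perm := rev p.

Inductive term : Type :=
| Atom (a : atom)
| Susp (p : perm) (X : var)
| Abs (a : atom) (t : term)
| Fun (f : fsym) (t : term)
| Tup (ts : list term).

Fixpoint pact (p : perm) (t : term) : term :=
  match t with
  | Atom a => Atom (act p a)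
  | Susp q X => Susp (p ++ q) X
  | Abs a s => Abs (act p a) (pact p s)
  | Fun f s => Fun f (pact p s)
  | Tup ts => Tup (map (pact p) ts)
  end.

(* capture-permitting substitution, (pi.X)theta = pi.(X theta) *)
Fixpoint tsub (theta : var -> term) (t : term) : term :=
  match t with
  | Atom a => Atom a
  | Susp q X => pact q (theta X)
  | Abs a s => Abs a (tsub theta s)
  | Fun f s => Fun f (tsub theta s)
  | Tup ts => Tup (map (tsub theta) ts)
  end.

Fixpoint ground (t : term) : bool :=
  match t with
  | Atom _ => true
  | Susp _ _ => false
  | Abs _ s => ground s
  | Fun _ s => ground s
  | Tup ts => forallb ground ts
  end.

Fixpoint vars (t : term) : list var :=
  match t with
  | Atom _ => []
  | Susp _ X => [X]
  | Abs _ s => vars s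
  | Fun _ s => vars s
  | Tup ts => flat_map vars ts
  end.

(* Freshness contexts: lists of constraints a#X, written (a, X). *)
Definition fctx := list (atom * var).

Inductive fresh (D : fctx) (a : atom) : term -> Prop :=
| fr_atom b : a <> b -> fresh D a (Atom b)
| fr_susp p X : In (act (perm_inv p) a, X) D -> fresh D a (Susp p X)
| fr_abs_eq t : fresh D a (Abs a t)
| fr_abs b t : a <> b -> fresh D a t -> fresh D a (Abs b t)
| fr_fun f t : fresh D a t -> fresh D a (Fun f t)
| fr_tup ts : Forall (fresh D a) ts -> fresh D a (Tup ts).

Inductive aeq (D : fctx) : term -> term -> Prop :=
| ae_atom a : aeq D (Atom a) (Atom a)
| ae_susp p q X :
    (forall a, act p a <> act q a -> In (a, X) D) ->
    aeq D (Susp p X) (Susp q X)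
| ae_abs_eq a s t : aeq D s t -> aeq D (Abs a s) (Abs a t)
| ae_abs a b s t :
    a <> b -> aeq D s (pact [(a, b)] t) -> fresh D a t ->
    aeq D (Abs a s) (Abs b t)
| ae_fun f s t : aeq D s t -> aeq D (Fun f s) (Fun f t)
| ae_tup ss ts : Forall2 (aeq D) ss ts -> aeq D (Tup ss) (Tup ts).

Inductive ctx : Type :=
| Hole
| CAbs (a : atom) (C : ctx)
| CFun (f : fsym) (C : ctx)
| CTup (l1 : list term) (C : ctx) (l2 : list term).

Fixpoint plug (C : ctx) (t : term) : term :=
  match C with
  | Hole => t
  | CAbs a C' => Abs a (plug C' t)
  | CFun f C' => Fun f (plug C' t)
  | CTup l1 C' l2 => Tup (l1 ++ plug C' t :: l2)
  end.

Fixpoint var_occs (X : var) (B : list atom) (t : term)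
  : list (list atom * perm) :=
  match t with
  | Atom _ => []
  | Susp p Y => if Nat.eqb X Y then [(B, p)] else []
  | Abs a s => var_occs X (a :: B) s
  | Fun _ s => var_occs X B s
  | Tup ts => flat_map (var_occs X B) ts
  end.

Fixpoint atom_occs (B : list atom) (t : term) : list (list atom * atom) :=
  match t with
  | Atom a => [(B, a)]
  | Susp _ _ => []
  | Abs a s => atom_occs (a :: B) s
  | Fun _ s => atom_occs B s
  | Tup ts => flat_map (atom_occs B) ts
  end.

Definition closed (D : fctx) (t : term) : Prop :=
  (forall B a, In (B, a) (atom_occs [] t) -> In a B) /\
  (forall X B1 p1 a,
      In (B1, p1) (var_occs X [] t) -> In (act p1 a) B1 ->
      forall B2 p2, In (B2, p2) (var_occs X [] t) ->
        In (act p2 a) B2 \/ In (a, X) D) /\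
  (forall X B1 p1 B2 p2 a,
      In (B1, p1) (var_occs X [] t) -> In (B2, p2) (var_occs X [] t) ->
      act p1 a <> act p2 a ->
      (~ In (act p1 a) B1 \/ ~ In (act p2 a) B2) ->
      In (a, X) D).

Record nrule : Type := NRule { nabla : fctx; lhs : term; rhs : term }.

Definition standard_rule (rho : nrule) : Prop :=
  (forall X, In X (vars (rhs rho)) -> In X (vars (lhs rho))) /\
  (forall a X, In (a, X) (nabla rho) -> In X (vars (lhs rho))) /\
  closed (nabla rho) (Tup [lhs rho; rhs rho]) /\
  (exists f s, lhs rho = Fun f s).

Definition perm_rule (p : perm) (rho : nrule) : nrule :=
  NRule (map (fun aX => (act p (fst aX), snd aX)) (nabla rho))
        (pact p (lhs rho)) (pact p (rhs rho)).

Definition equivariant (R : nrule -> Prop) : Prop :=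
  forall p rho, R rho -> R (perm_rule p rho).

Definition nom_step (R : nrule -> Prop) (s t : term) : Prop :=
  ground s = true /\ ground t = true /\
  exists rho p C s' (theta : var -> term),
    R rho /\
    s = plug C s' /\
    (forall a X, In (a, X) (nabla (perm_rule p rho)) -> fresh [] a (theta X)) /\
    aeq [] (tsub theta (lhs (perm_rule p rho))) s' /\
    aeq [] (plug C (tsub theta (rhs (perm_rule p rho)))) t.

Inductive mterm : Type :=
| MVar (a : atom)
| MMeta (Z : var) (args : list mterm)
| MAbs (a : atom) (t : mterm)
| MFun (f : fsym) (t : mterm)
| MTup (ts : list mterm).

Fixpoint is_term (t : mterm) : bool :=
  match t with
  | MVar _ => true
  | MMeta _ _ => false
  | MAbs _ s => is_term s
  | MFun _ s => is_term s
  | MTup ts => forallb is_term ts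
  end.

Fixpoint matoms (t : mterm) : list atom :=
  match t with
  | MVar a => [a]
  | MMeta _ ts => flat_map matoms ts
  | MAbs a s => a :: matoms s
  | MFun _ s => matoms s
  | MTup ts => flat_map matoms ts
  end.

Fixpoint metas (t : mterm) : list var :=
  match t with
  | MVar _ => []
  | MMeta Z ts => Z :: flat_map metas ts
  | MAbs _ s => metas s
  | MFun _ s => metas s
  | MTup ts => flat_map metas ts
  end.

Fixpoint meta_arities (t : mterm) : list (var * nat) :=
  match t with
  | MVar _ => []
  | MMeta Z ts => (Z, length ts) :: flat_map meta_arities ts
  | MAbs _ s => meta_arities s
  | MFun _ s => meta_arities s
  | MTup ts => flat_map meta_arities ts
  end.

Definition fresh_for (l : list atom) : atom := S (list_max l).

Fixpoint msubst (rho : atom -> mterm) (t : mterm) : mterm :=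
  match t with
  | MVar a => rho a
  | MMeta Z ts => MMeta Z (map (msubst rho) ts)
  | MAbs a s =>
      let b := fresh_for (matoms s ++ flat_map (fun x => matoms (rho x)) (matoms s)) in
      MAbs b (msubst (fun x => if Nat.eqb x a then MVar b else rho x) s)
  | MFun f s => MFun f (msubst rho s)
  | MTup ts => MTup (map (msubst rho) ts)
  end.

(* a substitute \lambda(a1,...,an).s *)
Definition substitute := (list atom * mterm)%type.
Definition valuation := var -> substitute.

Fixpoint bindp (ps : list atom) (us : list mterm) (x : atom) : mterm :=
  match ps, us with
  | p :: ps', u :: us' => if Nat.eqb x p then u else bindp ps' us' x
  | _, _ => MVar x
  end.

(* sigma(t) for a meta-term t, with bound variables renamed apart;
   env records the renaming of bound variables *)
Fixpoint mapp (sigma : valuation) (env : atom -> mterm) (t : mterm) : mterm :=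
  match t with
  | MVar a => env a
  | MMeta Z ts =>
      msubst (bindp (fst (sigma Z)) (map (mapp sigma env) ts)) (snd (sigma Z))
  | MAbs a s =>
      let b := fresh_for (matoms s
                          ++ flat_map (fun x => matoms (env x)) (matoms s)
                          ++ flat_map (fun Z => fst (sigma Z) ++ matoms (snd (sigma Z)))
                                      (metas s)) in
      MAbs b (mapp sigma (fun x => if Nat.eqb x a then MVar b else env x) s)
  | MFun f s => MFun f (mapp sigma env s)
  | MTup ts => MTup (map (mapp sigma env) ts)
  end.

Definition valuate (sigma : valuation) (t : mterm) : mterm := mapp sigma MVar t.

Fixpoint mfree (a : atom) (t : mterm) : bool :=
  match t with
  | MVar b => Nat.eqb a b
  | MMeta _ ts => existsb (mfree a) ts
  | MAbs b s => negb (Nat.eqb a b) && mfree a s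
  | MFun _ s => mfree a s
  | MTup ts => existsb (mfree a) ts
  end.

Fixpoint mswap (a b : atom) (t : mterm) : mterm :=
  match t with
  | MVar c => MVar (swap a b c)
  | MMeta Z ts => MMeta Z (map (mswap a b) ts)
  | MAbs c s => MAbs (swap a b c) (mswap a b s)
  | MFun f s => MFun f (mswap a b s)
  | MTup ts => MTup (map (mswap a b) ts)
  end.

Inductive maeq : mterm -> mterm -> Prop :=
| mae_var a : maeq (MVar a) (MVar a)
| mae_meta Z ss ts : Forall2 maeq ss ts -> maeq (MMeta Z ss) (MMeta Z ts)
| mae_abs_eq a s t : maeq s t -> maeq (MAbs a s) (MAbs a t)
| mae_abs a b s t :
    a <> b -> mfree a t = false -> maeq s (mswap a b t) ->
    maeq (MAbs a s) (MAbs b t)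
| mae_fun f s t : maeq s t -> maeq (MFun f s) (MFun f t)
| mae_tup ss ts : Forall2 maeq ss ts -> maeq (MTup ss) (MTup ts).

Inductive mctx : Type :=
| MHole
| MCAbs (a : atom) (C : mctx)
| MCFun (f : fsym) (C : mctx)
| MCTup (l1 : list mterm) (C : mctx) (l2 : list mterm).

Fixpoint mplug (C : mctx) (t : mterm) : mterm :=
  match C with
  | MHole => t
  | MCAbs a C' => MAbs a (mplug C' t)
  | MCFun f C' => MFun f (mplug C' t)
  | MCTup l1 C' l2 => MTup (l1 ++ mplug C' t :: l2)
  end.

Definition valuation_ok (sigma : valuation) (l r : mterm) : Prop :=
  (forall Z, is_term (snd (sigma Z)) = true /\ NoDup (fst (sigma Z))) /\
  (forall Z n, In (Z, n) (meta_arities l ++ meta_arities r) ->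
               n = length (fst (sigma Z))).

Definition crs_step (R' : mterm * mterm -> Prop) (s t : mterm) : Prop :=
  is_term s = true /\ is_term t = true /\
  exists l r C sigma,
    R' (l, r) /\ valuation_ok sigma l r /\
    maeq s (mplug C (valuate sigma l)) /\
    maeq t (mplug C (valuate sigma r)).

Definition terminating {A : Type} (step : A -> A -> Prop) : Prop :=
  ~ exists f : nat -> A, forall n, step (f n) (f (S n)).

Definition Lambda (t : term) (X : var) : list atom :=
  flat_map fst (var_occs X [] t).

Definition in_fctx (D : fctx) (a : atom) (X : var) : bool :=
  existsb (fun bY => Nat.eqb (fst bY) a && Nat.eqb (snd bY) X) D.

(* ascending list of {pi^-1(a) | a in Lam} \ {a | a#X in D} *)
Definition xs (D : fctx) (Lam : list atom) (p : perm) (X : var) : list atom :=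
  filter (fun b => existsb (Nat.eqb (act p b)) Lam && negb (in_fctx D b X))
         (seq 0 (S (list_max (map (act (perm_inv p)) Lam)))).

Fixpoint Tr (Lam : var -> list atom) (D : fctx) (t : term) : mterm :=
  match t with
  | Atom a => MVar a
  | Susp p X => MMeta X (map (fun b => MVar (act p b)) (xs D (Lam X) p X))
  | Abs a s => MAbs a (Tr Lam D s)
  | Fun f s => MFun f (Tr Lam D s)
  | Tup ts => MTup (map (Tr Lam D) ts)
  end.

Definition T (D : fctx) (t : term) : mterm := Tr (Lambda t) D t.

Definition crs_of (R : nrule -> Prop) (lr : mterm * mterm) : Prop :=
  exists rho, R rho /\ lr = (T (nabla rho) (lhs rho), T (nabla rho) (rhs rho)).

(* A ground nominal term is directly a CRS term.  A nominal step with the rule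
   [pi.rho], matcher [theta] and context [C] is simulated by a CRS step with the
   translated rule, the same context, and the valuation sending [X] to the
   substitute [\lambda(p0.xs).p0.(theta X)], where [p0.X] is one fixed occurrence
   of [X] in the left-hand side.  Closedness of the rule is exactly what makes
   this single substitute instantiate every occurrence [p.X] of [X] (in [l] and
   in [r]) to [p.(theta X)] up to renaming of bound variables; both the nominal
   and the CRS notion of alpha-equivalence are compared through a nameless
   representation with de Bruijn levels.  An infinite nominal reduction thus
   maps to an infinite CRS reduction. *)

From Stdlib Require Import List Arith Bool Lia FinFun.
Import ListNotations.

Fixpoint term_nested_ind (P : term -> Prop)
  (Hat : forall a, P (Atom a))
  (Hs : forall p X, P (Susp p X))
  (Ha : forall a s, P s -> P (Abs a s))
  (Hf : forall f s, P s -> P (Fun f s))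
  (Ht : forall ts, Forall P ts -> P (Tup ts)) (t : term) : P t :=
  match t with
  | Atom a => Hat a
  | Susp p X => Hs p X
  | Abs a s => Ha a s (term_nested_ind P Hat Hs Ha Hf Ht s)
  | Fun f s => Hf f s (term_nested_ind P Hat Hs Ha Hf Ht s)
  | Tup ts => Ht ts ((fix F l := match l return Forall P l with
      | [] => Forall_nil _
      | x :: l' => Forall_cons x (term_nested_ind P Hat Hs Ha Hf Ht x) (F l') end) ts)
  end.

Fixpoint mterm_nested_ind (P : mterm -> Prop)
  (Hv : forall a, P (MVar a))
  (Hm : forall Z ts, Forall P ts -> P (MMeta Z ts))
  (Ha : forall a s, P s -> P (MAbs a s))
  (Hf : forall f s, P s -> P (MFun f s))
  (Ht : forall ts, Forall P ts -> P (MTup ts)) (t : mterm) : P t :=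
  match t with
  | MVar a => Hv a
  | MMeta Z ts => Hm Z ts ((fix F l := match l return Forall P l with
      | [] => Forall_nil _
      | x :: l' => Forall_cons x (mterm_nested_ind P Hv Hm Ha Hf Ht x) (F l') end) ts)
  | MAbs a s => Ha a s (mterm_nested_ind P Hv Hm Ha Hf Ht s)
  | MFun f s => Hf f s (mterm_nested_ind P Hv Hm Ha Hf Ht s)
  | MTup ts => Ht ts ((fix F l := match l return Forall P l with
      | [] => Forall_nil _
      | x :: l' => Forall_cons x (mterm_nested_ind P Hv Hm Ha Hf Ht x) (F l') end) ts)
  end.

Lemma swap_involutive a b c : swap a b (swap a b c) = c.
Proof.
  unfold swap.
  destruct (Nat.eqb_spec c a), (Nat.eqb_spec c b); subst;
    repeat (rewrite ?Nat.eqb_refl; simpl);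
    repeat match goal with |- context [Nat.eqb ?x ?y] => destruct (Nat.eqb_spec x y) end;
    congruence.
Qed.

Lemma swap_inj a b x y : swap a b x = swap a b y -> x = y.
Proof. intro H. now rewrite <- (swap_involutive a b x), H, swap_involutive. Qed.

Lemma act_app p q c : act (p ++ q) c = act p (act q c).
Proof. unfold act. now rewrite fold_right_app. Qed.

Lemma act_inv_act p c : act (perm_inv p) (act p c) = c.
Proof.
  unfold perm_inv. induction p as [|ab p IH]; simpl; auto.
  now rewrite act_app; simpl; rewrite swap_involutive.
Qed.

Lemma act_act_inv p c : act p (act (perm_inv p) c) = c.
Proof.
  pose proof (act_inv_act (rev p) c) as H.
  unfold perm_inv in *. now rewrite rev_involutive in H.
Qed.

Lemma act_inj p : Injective (act p).
Proof. intros x y H. now rewrite <- (act_inv_act p x), H, act_inv_act. Qed.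

Lemma fresh_for_not_In l x : In x l -> x <> fresh_for l.
Proof.
  unfold fresh_for. intros H.
  enough (x <= list_max l) by lia.
  pose proof (proj1 (list_max_le l _) (le_n _)) as Hmax.
  rewrite Forall_forall in Hmax. auto.
Qed.

(** * Ground nominal terms as CRS terms *)

(* Only applied to ground terms, so the junk image of [Susp] never matters. *)
Fixpoint embed (t : term) : mterm :=
  match t with
  | Atom a => MVar a
  | Susp _ _ => MTup []
  | Abs a s => MAbs a (embed s)
  | Fun f s => MFun f (embed s)
  | Tup ts => MTup (map embed ts)
  end.

Fixpoint embed_ctx (C : ctx) : mctx :=
  match C with
  | Hole => MHole
  | CAbs a C' => MCAbs a (embed_ctx C')
  | CFun f C' => MCFun f (embed_ctx C')
  | CTup l1 C' l2 => MCTup (map embed l1) (embed_ctx C') (map embed l2)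
  end.

Fixpoint mrename (phi : atom -> atom) (t : mterm) : mterm :=
  match t with
  | MVar a => MVar (phi a)
  | MMeta Z ts => MMeta Z (map (mrename phi) ts)
  | MAbs a s => MAbs (phi a) (mrename phi s)
  | MFun f s => MFun f (mrename phi s)
  | MTup ts => MTup (map (mrename phi) ts)
  end.

Lemma mswap_mrename a b t : mswap a b t = mrename (swap a b) t.
Proof.
  induction t using mterm_nested_ind; simpl; f_equal; auto;
    apply map_ext_in; intros; rewrite Forall_forall in H; auto.
Qed.

Lemma embed_pact p t : embed (pact p t) = mrename (act p) (embed t).
Proof.
  induction t using term_nested_ind; simpl; f_equal; auto.
  rewrite !map_map. apply map_ext_in; intros; rewrite Forall_forall in H; auto.
Qed.

Lemma embed_plug C t : embed (plug C t) = mplug (embed_ctx C) (embed t).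
Proof. induction C; simpl; rewrite ?map_app; simpl; congruence. Qed.

Lemma is_term_embed t : is_term (embed t) = true.
Proof.
  induction t using term_nested_ind; simpl; auto.
  apply forallb_forall. intros x Hx. apply in_map_iff in Hx as (y & <- & Hy).
  rewrite Forall_forall in H; auto.
Qed.

Lemma existsb_In {A} (f : A -> bool) l x : In x l -> f x = true -> existsb f l = true.
Proof. intros. apply existsb_exists. eauto. Qed.

Lemma mfree_matoms x t : mfree x t = true -> In x (matoms t).
Proof.
  induction t using mterm_nested_ind; simpl; intros Hf;
    try (apply existsb_exists in Hf as (u & Hu & Hf'); rewrite Forall_forall in H;
         apply in_flat_map; eauto).
  - apply Nat.eqb_eq in Hf; auto.
  - apply andb_prop in Hf as [_ Hf]; auto.
  - auto.
Qed.

Lemma matoms_mrename phi x t : In x (matoms t) -> In (phi x) (matoms (mrename phi t)).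
Proof.
  induction t using mterm_nested_ind; simpl; intros Hx;
    try (apply in_flat_map in Hx as (u & Hu & Hx); rewrite Forall_forall in H;
         apply in_flat_map; exists (mrename phi u); split; [apply in_map|]; auto).
  - destruct Hx as [<-|[]]; auto.
  - destruct Hx as [<-|Hx]; auto.
  - auto.
Qed.

Lemma fresh_embed_mfree a t : fresh [] a t -> mfree a (embed t) = false.
Proof.
  induction t using term_nested_ind; intros Hf; inversion Hf; subst; simpl.
  - now apply Nat.eqb_neq.
  - contradiction.
  - now rewrite Nat.eqb_refl.
  - now rewrite IHt, andb_false_r.
  - auto.
  - apply not_true_iff_false. intros E.
    apply existsb_exists in E as (u & Hu & E). apply in_map_iff in Hu as (v & <- & Hv).
    rewrite Forall_forall in H, H1. rewrite H in E; auto. discriminate.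
Qed.

(** * A nameless representation of CRS terms *)

(* Bound variables become their binding depth (de Bruijn levels), free
   variables are kept or mapped by [h]. *)
Inductive dterm : Type :=
| DBound (l : nat)
| DFree (a : atom)
| DMeta (Z : var) (ds : list dterm)
| DAbs (d : dterm)
| DFun (f : fsym) (d : dterm)
| DTup (ds : list dterm).

Fixpoint level_of (E : list (atom * nat)) (x : atom) : option nat :=
  match E with
  | [] => None
  | (a, l) :: E' => if Nat.eqb x a then Some l else level_of E' x
  end.

Definition dvar (E : list (atom * nat)) (h : atom -> dterm) (x : atom) : dterm :=
  match level_of E x with Some l => DBound l | None => h x end.

Fixpoint debruijn (n : nat) (E : list (atom * nat)) (h : atom -> dterm) (t : mterm)
  : dterm :=
  match t with
  | MVar x => dvar E h x
  | MMeta Z ts => DMeta Z (map (debruijn n E h) ts)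
  | MAbs a s => DAbs (debruijn (S n) ((a, n) :: E) h s)
  | MFun f s => DFun f (debruijn n E h s)
  | MTup ts => DTup (map (debruijn n E h) ts)
  end.

Lemma dvar_hd a n E h : dvar ((a, n) :: E) h a = DBound n.
Proof. unfold dvar; simpl. now rewrite Nat.eqb_refl. Qed.

Lemma dvar_tl a x n E h : x <> a -> dvar ((a, n) :: E) h x = dvar E h x.
Proof. intro H. unfold dvar; simpl. apply Nat.eqb_neq in H. now rewrite H. Qed.

Lemma debruijn_mrename phi : Injective phi ->
  forall w n E1 E2 h1 h2,
  (forall y, mfree y w = true -> dvar E1 h1 (phi y) = dvar E2 h2 y) ->
  debruijn n E1 h1 (mrename phi w) = debruijn n E2 h2 w.
Proof.
  intros Hinj w. induction w using mterm_nested_ind; intros n E1 E2 h1 h2 Hc; simpl;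
    try (f_equal; rewrite map_map; apply map_ext_in; intros u Hu;
         rewrite Forall_forall in H; apply H; auto;
         intros y Hy; apply Hc; simpl; eapply existsb_In; eauto).
  - apply Hc. simpl. apply Nat.eqb_refl.
  - f_equal. apply IHw. intros y Hy. destruct (Nat.eq_dec y a) as [->|Nya].
    + now rewrite !dvar_hd.
    + rewrite !dvar_tl by (auto; intros E; apply Nya, Hinj, E).
      apply Hc. simpl. apply Nat.eqb_neq in Nya. now rewrite Nya, Hy.
  - f_equal. auto.
Qed.

Lemma debruijn_mswap m n E h a b t : a <> b -> mfree a t = false ->
  debruijn m ((a, n) :: E) h (mswap a b t) = debruijn m ((b, n) :: E) h t.
Proof.
  intros Nab Ha. rewrite mswap_mrename. apply debruijn_mrename; [intros ??; apply swap_inj|].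
  intros y Hy. unfold swap.
  destruct (Nat.eqb_spec y a) as [->|Nya]; [congruence|].
  destruct (Nat.eqb_spec y b) as [->|Nyb].
  - now rewrite !dvar_hd.
  - now rewrite !dvar_tl.
Qed.

Lemma debruijn_msubst : forall w n E1 E2 h1 h2 rho,
  (forall y, mfree y w = true ->
     exists z, rho y = MVar z /\ dvar E1 h1 y = dvar E2 h2 z) ->
  debruijn n E1 h1 w = debruijn n E2 h2 (msubst rho w).
Proof.
  induction w using mterm_nested_ind; intros n E1 E2 h1 h2 rho Hc; simpl;
    try (f_equal; rewrite map_map; apply map_ext_in; intros u Hu;
         rewrite Forall_forall in H; apply H; auto;
         intros y Hy; apply Hc; simpl; eapply existsb_In; eauto).
  - destruct (Hc a) as (z & -> & Hd); [simpl; apply Nat.eqb_refl|]. exact Hd.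
  - f_equal. apply IHw. intros y Hy. destruct (Nat.eq_dec y a) as [->|Nya].
    + rewrite Nat.eqb_refl. eexists; split; eauto. now rewrite !dvar_hd.
    + apply Nat.eqb_neq in Nya as Nya'. rewrite Nya'.
      destruct (Hc y) as (z & Hz & Hd); [simpl; now rewrite Nya', Hy|].
      exists z. split; auto. rewrite !dvar_tl; auto.
      apply fresh_for_not_In, in_or_app. right. apply in_flat_map. exists y. split.
      * now apply mfree_matoms.
      * rewrite Hz. simpl; auto.
  - f_equal. auto.
Qed.

Lemma aeq_debruijn s t : aeq [] s t ->
  forall n E h, debruijn n E h (embed s) = debruijn n E h (embed t).
Proof.
  revert t. induction s using term_nested_ind; intros t Ha n E h;
    inversion Ha; subst; simpl; f_equal; auto.
  - rewrite (IHs _ H2), embed_pact. change (mrename (act [(a, b)]) (embed t0))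
      with (mrename (swap a b) (embed t0)).
    rewrite <- mswap_mrename. apply debruijn_mswap; auto. now apply fresh_embed_mfree.
  - rewrite !map_map. clear Ha. revert ts0 H1.
    induction H; intros ts0 H1; inversion H1; subst; simpl; f_equal; auto.
Qed.

Fixpoint leaves (d : dterm) : list dterm :=
  match d with
  | DBound _ | DFree _ => [d]
  | DMeta _ ds => flat_map leaves ds
  | DAbs d' => leaves d'
  | DFun _ d' => leaves d'
  | DTup ds => flat_map leaves ds
  end.

Lemma leaves_dvar E x : leaves (dvar E DFree x) = [dvar E DFree x].
Proof. unfold dvar. now destruct (level_of E x). Qed.

Lemma leaves_debruijn_mfree : forall w n E x, mfree x w = true ->
  In (dvar E DFree x) (leaves (debruijn n E DFree w)).
Proof.
  induction w using mterm_nested_ind; intros n E x Hf; simpl in *;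
    try (apply existsb_exists in Hf as (u & Hu & Hf); rewrite Forall_forall in H;
         apply in_flat_map; exists (debruijn n E DFree u); split; [apply in_map|]; auto).
  - apply Nat.eqb_eq in Hf as ->. rewrite leaves_dvar. simpl; auto.
  - apply andb_prop in Hf as [Ha Hf]. apply negb_true_iff, Nat.eqb_neq in Ha.
    rewrite <- (dvar_tl a x n E DFree Ha). auto.
  - auto.
Qed.

Lemma leaves_debruijn_inv : forall w n E d, In d (leaves (debruijn n E DFree w)) ->
  (exists x, mfree x w = true /\ d = dvar E DFree x) \/ (exists l, d = DBound l /\ n <= l).
Proof.
  induction w using mterm_nested_ind; intros n E d Hd; simpl in *;
    try (apply in_flat_map in Hd as (e & He & Hd); apply in_map_iff in He as (u & <- & Hu);
         rewrite Forall_forall in H;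
         destruct (H u Hu n E d Hd) as [(x & Hx & ->)|]; auto;
         left; exists x; split; auto; eapply existsb_In; eauto).
  - rewrite leaves_dvar in Hd. destruct Hd as [<-|[]].
    left. exists a. split; auto. apply Nat.eqb_refl.
  - destruct (IHw _ _ _ Hd) as [(x & Hx & ->)|(l & -> & Hl)].
    + destruct (Nat.eq_dec x a) as [->|Nxa].
      * rewrite dvar_hd. right. eauto.
      * left. exists x. rewrite dvar_tl by auto. split; auto.
        apply Nat.eqb_neq in Nxa. now rewrite Nxa, Hx.
    + right. exists l. split; auto. lia.
  - auto.
Qed.

Definition wf_env (n : nat) (E : list (atom * nat)) : Prop :=
  (forall x l, level_of E x = Some l -> l < n) /\
  (forall x y l, level_of E x = Some l -> level_of E y = Some l -> x = y).

Lemma wf_env_nil : wf_env 0 [].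
Proof. split; discriminate. Qed.

Lemma wf_env_cons n E a : wf_env n E -> wf_env (S n) ((a, n) :: E).
Proof.
  intros [Hlt Hinj]. split.
  - intros x l. simpl. destruct (Nat.eqb_spec x a); intros Hl.
    + injection Hl; lia.
    + apply Hlt in Hl. lia.
  - intros x y l. simpl.
    destruct (Nat.eqb_spec x a), (Nat.eqb_spec y a); intros Hx Hy; try congruence.
    + injection Hx as <-. apply Hlt in Hy. lia.
    + injection Hy as <-. apply Hlt in Hx. lia.
    + eauto.
Qed.

Lemma dvar_inj n E x y : wf_env n E -> dvar E DFree x = dvar E DFree y -> x = y.
Proof.
  intros [_ Hinj]. unfold dvar.
  destruct (level_of E x) eqn:Ex, (level_of E y) eqn:Ey; intros He;
    try discriminate; injection He as ->; eauto.
Qed.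

Lemma dvar_not_free_level n E a : wf_env n E -> dvar E DFree a <> DBound n.
Proof.
  intros [Hlt _]. unfold dvar. destruct (level_of E a) eqn:Ea; [|discriminate].
  intros [= ->]. apply Hlt in Ea. lia.
Qed.

Lemma debruijn_abs_not_mfree n E a b s t : wf_env n E -> a <> b ->
  debruijn (S n) ((a, n) :: E) DFree s = debruijn (S n) ((b, n) :: E) DFree t ->
  mfree a t = false.
Proof.
  intros Hwf Nab Heq. apply not_true_iff_false. intros Hf.
  apply (leaves_debruijn_mfree t (S n) ((b, n) :: E)) in Hf.
  rewrite <- Heq, dvar_tl in Hf by auto.
  apply leaves_debruijn_inv in Hf as [(x & _ & Hd)|(l & Hd & Hl)].
  - destruct (Nat.eq_dec x a) as [->|Nxa].
    + rewrite dvar_hd in Hd. eapply dvar_not_free_level; eauto.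
    + rewrite dvar_tl in Hd by auto. apply (dvar_inj n E) in Hd; auto.
  - unfold dvar in Hd. destruct Hwf as [Hlt _].
    destruct (level_of E a) eqn:Ea; [|discriminate].
    injection Hd as ->. apply Hlt in Ea. lia.
Qed.

Fixpoint msize (t : mterm) : nat :=
  match t with
  | MVar _ => 1
  | MMeta _ ts => S (list_sum (map msize ts))
  | MAbs _ s => S (msize s)
  | MFun _ s => S (msize s)
  | MTup ts => S (list_sum (map msize ts))
  end.

Lemma map_eq_Forall2 {A B C} (f : A -> C) (g : B -> C) l1 l2 :
  map f l1 = map g l2 -> Forall2 (fun x y => f x = g y) l1 l2.
Proof.
  revert l2; induction l1; destruct l2; simpl; intros H; try discriminate;
    constructor; injection H; auto.
Qed.

Definition is_leaf (d : dterm) : bool :=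
  match d with DBound _ | DFree _ => true | _ => false end.

Lemma is_leaf_dvar E x : is_leaf (dvar E DFree x) = true.
Proof. unfold dvar. now destruct (level_of E x). Qed.

Lemma debruijn_maeq_bounded : forall k s, msize s <= k -> forall t n E, wf_env n E ->
  debruijn n E DFree s = debruijn n E DFree t -> maeq s t.
Proof.
  induction k; intros s Hs; [destruct s; simpl in Hs; lia|].
  assert (Hlist : forall n E ss ts, list_sum (map msize ss) <= k -> wf_env n E ->
            map (debruijn n E DFree) ss = map (debruijn n E DFree) ts -> Forall2 maeq ss ts).
  { intros n E ss ts Hss Hwf Hm. apply map_eq_Forall2 in Hm.
    induction Hm as [|s1 t1 ss' ts' H1 Hm IH]; constructor; simpl in Hss.
    - eapply IHk; eauto. lia.
    - apply IH. lia. }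
  intros t n E Hwf Heq.
  destruct s as [x|Z ss|a s1|f s1|ss]; destruct t as [y|Z' ts|b t1|g t1|ts];
    simpl in Heq, Hs;
    try (apply (f_equal is_leaf) in Heq; rewrite ?is_leaf_dvar in Heq; discriminate);
    try discriminate.
  - apply (dvar_inj n E) in Heq as ->; auto. constructor.
  - injection Heq as <- Hm. constructor. eapply Hlist; eauto. lia.
  - injection Heq as Hb. destruct (Nat.eq_dec a b) as [<-|Nab].
    + constructor. eapply IHk; [lia| |eauto]. now apply wf_env_cons.
    + assert (Hfa : mfree a t1 = false) by (eapply debruijn_abs_not_mfree; eauto).
      apply mae_abs; auto.
      apply (IHk s1 ltac:(lia) _ (S n) ((a, n) :: E)); [now apply wf_env_cons|].
      rewrite Hb. symmetry. now apply debruijn_mswap.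
  - injection Heq as <- Hb. constructor. eapply IHk; [lia|eauto|eauto].
  - injection Heq as Hm. constructor. eapply Hlist; eauto. lia.
Qed.

Lemma debruijn_maeq s t : debruijn 0 [] DFree s = debruijn 0 [] DFree t -> maeq s t.
Proof. apply (debruijn_maeq_bounded (msize s) s (le_n _) t 0 []), wf_env_nil. Qed.

Lemma debruijn_mplug C : forall x y, (forall n E, debruijn n E DFree x = debruijn n E DFree y) ->
  forall n E, debruijn n E DFree (mplug C x) = debruijn n E DFree (mplug C y).
Proof.
  induction C; intros x y H n E; simpl; auto; rewrite ?map_app; simpl;
    now rewrite (IHC x y H).
Qed.

Lemma in_fctx_iff D a X : in_fctx D a X = true <-> In (a, X) D.
Proof.
  unfold in_fctx. rewrite existsb_exists. split.
  - intros ((b, Y) & Hin & H). apply andb_prop in H as [H1 H2].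
    apply Nat.eqb_eq in H1, H2. simpl in *. now subst.
  - intros H. exists (a, X). split; auto. simpl. now rewrite !Nat.eqb_refl.
Qed.

Lemma xs_filter_iff D Lam p X c :
  existsb (Nat.eqb (act p c)) Lam && negb (in_fctx D c X) = true <->
  In (act p c) Lam /\ ~ In (c, X) D.
Proof.
  rewrite andb_true_iff, existsb_exists, negb_true_iff, <- not_true_iff_false, in_fctx_iff.
  split.
  - intros [(v & Hv & E) F]. now apply Nat.eqb_eq in E as ->.
  - intros [H1 H2]. split; auto. exists (act p c). split; auto. apply Nat.eqb_refl.
Qed.

Lemma xs_filter_bound D Lam p X c :
  existsb (Nat.eqb (act p c)) Lam && negb (in_fctx D c X) = true ->
  c < S (list_max (map (act (perm_inv p)) Lam)).
Proof.
  intros [Hc _]%xs_filter_iff.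
  enough (c <= list_max (map (act (perm_inv p)) Lam)) by lia.
  pose proof (proj1 (list_max_le (map (act (perm_inv p)) Lam) _) (le_n _)) as Hmax.
  rewrite Forall_forall in Hmax. apply Hmax, in_map_iff.
  exists (act p c). split; auto. apply act_inv_act.
Qed.

Lemma xs_In D Lam p X c : In c (xs D Lam p X) <-> In (act p c) Lam /\ ~ In (c, X) D.
Proof.
  unfold xs. rewrite filter_In, in_seq, <- xs_filter_iff. split; [tauto|].
  intros Hc. split; auto. pose proof (xs_filter_bound _ _ _ _ _ Hc). lia.
Qed.

Lemma filter_seq_bound (P : nat -> bool) N K : (forall c, P c = true -> c < N) ->
  filter P (seq 0 (N + K)) = filter P (seq 0 N).
Proof.
  intros H. rewrite seq_app, filter_app. simpl.
  enough (filter P (seq N K) = []) as -> by apply app_nil_r.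
  rewrite <- (filter_false (seq N K)). apply filter_ext_in.
  intros c Hc%in_seq. apply not_true_iff_false. intros F%H. lia.
Qed.

Lemma filter_seq_ext (P Q : nat -> bool) N M : (forall c, P c = Q c) ->
  (forall c, P c = true -> c < N) -> (forall c, Q c = true -> c < M) ->
  filter P (seq 0 N) = filter Q (seq 0 M).
Proof.
  intros HPQ HP HQ.
  rewrite <- (filter_seq_bound P N M), <- (filter_seq_bound Q M N) by auto.
  rewrite Nat.add_comm. now apply filter_ext.
Qed.

Lemma xs_ext D Lam1 Lam2 p1 p2 X :
  (forall c, In (act p1 c) Lam1 /\ ~ In (c, X) D <-> In (act p2 c) Lam2 /\ ~ In (c, X) D) ->
  xs D Lam1 p1 X = xs D Lam2 p2 X.
Proof.
  intros Hc. apply filter_seq_ext; intros c; try apply xs_filter_bound.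
  apply eq_iff_eq_true. rewrite !xs_filter_iff. apply Hc.
Qed.


(** * Closedness and the valuation induced by a matching substitution *)

Lemma var_occs_vars X B u o : In o (var_occs X B u) -> In X (vars u).
Proof.
  revert B. induction u using term_nested_ind; intros B Ho; simpl in *; eauto.
  - destruct (Nat.eqb_spec X X0) as [->|]; simpl in *; tauto.
  - apply in_flat_map in Ho as (v & Hv & Ho). rewrite Forall_forall in H.
    apply in_flat_map. eauto.
Qed.

Lemma vars_var_occs X B u : In X (vars u) -> exists o, In o (var_occs X B u).
Proof.
  revert B. induction u using term_nested_ind; intros B Hx; simpl in *; try tauto; eauto.
  - destruct Hx as [->|[]]. rewrite Nat.eqb_refl. eexists; simpl; eauto.
  - apply in_flat_map in Hx as (v & Hv & Hx). rewrite Forall_forall in H.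
    destruct (H v Hv B Hx) as (o & Ho). exists o. apply in_flat_map. eauto.
Qed.

Lemma closed_Lambda_iff D T0 t X B p c : closed D T0 ->
  (forall o, In o (var_occs X [] t) -> In o (var_occs X [] T0)) ->
  In (B, p) (var_occs X [] t) -> ~ In (c, X) D ->
  In (act p c) (Lambda t X) <-> In (act p c) B.
Proof.
  intros (_ & Habs & Hdiff) Hsub Hin Hc. split.
  - intros ((B2, p2) & Ho2 & Hb2)%in_flat_map. simpl in Hb2.
    set (e := act (perm_inv p2) (act p c)).
    assert (He : act p2 e = act p c) by apply act_act_inv.
    destruct (Nat.eq_dec c e) as [Ec|Nc].
    + rewrite <- Ec in He. rewrite <- He in Hb2.
      destruct (Habs X B2 p2 c (Hsub _ Ho2) Hb2 B p (Hsub _ Hin)); tauto.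
    + destruct (In_dec Nat.eq_dec (act p c) B) as [|Nb]; auto. exfalso. apply Hc.
      apply (Hdiff X B p B2 p2 c (Hsub _ Hin) (Hsub _ Ho2)); auto.
      intros E. rewrite <- He in E. apply act_inj in E. congruence.
  - intros Hb. apply in_flat_map. exists (B, p). auto.
Qed.

(* [p0] is the fixed occurrence through which [sigma] sees [theta X]; the side
   condition is what makes the same substitute correct at the occurrence [p.X]. *)
Definition represents (sigma : valuation) (theta : var -> term) (D : fctx) (top : term)
  : Prop :=
  forall X B p, In (B, p) (var_occs X [] top) ->
  exists p0,
    sigma X = (map (act p0) (xs D (Lambda top X) p X), embed (pact p0 (theta X))) /\
    forall y, mfree y (embed (theta X)) = true -> ~ In y (xs D (Lambda top X) p X) ->
      ~ In (act p y) B /\ act p0 y = act p y.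

Definition valuation_of (D : fctx) (l : term) (theta : var -> term) : valuation :=
  fun X =>
    let p0 := snd (hd ([], []) (var_occs X [] l)) in
    (map (act p0) (xs D (Lambda l X) p0 X), embed (pact p0 (theta X))).

Lemma represents_valuation_of D l r theta top : closed D (Tup [l; r]) ->
  (forall X, In X (vars r) -> In X (vars l)) ->
  (forall a X, In (a, X) D -> fresh [] a (theta X)) ->
  top = l \/ top = r ->
  represents (valuation_of D l theta) theta D top.
Proof.
  intros Hcl Hv Hfr Htop X B p Hin.
  assert (Hocc : var_occs X [] (Tup [l; r]) = var_occs X [] l ++ var_occs X [] r)
    by (simpl; now rewrite app_nil_r).
  assert (Hl : forall o, In o (var_occs X [] l) -> In o (var_occs X [] (Tup [l; r])))
    by (intros; rewrite Hocc; apply in_or_app; auto).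
  assert (Htops : forall o, In o (var_occs X [] top) -> In o (var_occs X [] (Tup [l; r])))
    by (intros; rewrite Hocc; apply in_or_app; destruct Htop as [->| ->]; auto).
  assert (H0 : In (hd ([], []) (var_occs X [] l)) (var_occs X [] l)).
  { assert (Hx : In X (vars l))
      by (destruct Htop as [->| ->]; [|apply Hv]; eapply var_occs_vars; eauto).
    destruct (vars_var_occs X [] l Hx) as (o & Ho).
    destruct (var_occs X [] l); [destruct Ho|]. simpl; auto. }
  unfold valuation_of. destruct (hd ([], []) (var_occs X [] l)) as (B0, p0). simpl.
  pose proof Hcl as (_ & Habs & Hdiff).
  assert (Hxs : xs D (Lambda l X) p0 X = xs D (Lambda top X) p X).
  { apply xs_ext. intros c. split; intros [Hc Hf]; split; auto.
    - apply (closed_Lambda_iff D _ l X B0 p0 c Hcl Hl H0 Hf) in Hc.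
      apply (closed_Lambda_iff D _ top X B p c Hcl Htops Hin Hf).
      destruct (Habs X B0 p0 c (Hl _ H0) Hc B p (Htops _ Hin)); tauto.
    - apply (closed_Lambda_iff D _ top X B p c Hcl Htops Hin Hf) in Hc.
      apply (closed_Lambda_iff D _ l X B0 p0 c Hcl Hl H0 Hf).
      destruct (Habs X B p c (Htops _ Hin) Hc B0 p0 (Hl _ H0)); tauto. }
  exists p0. rewrite Hxs. split; auto.
  intros y Hy Hn.
  assert (Hf : ~ In (y, X) D) by (intros F%Hfr%fresh_embed_mfree; congruence).
  assert (Hb : ~ In (act p y) B).
  { intros F. apply Hn, xs_In. split; auto.
    now apply (closed_Lambda_iff D _ top X B p y Hcl Htops Hin Hf). }
  split; auto.
  destruct (Nat.eq_dec (act p0 y) (act p y)) as [|Ne]; auto. exfalso. apply Hf.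
  apply (Hdiff X B p B0 p0 y (Htops _ Hin) (Hl _ H0)); auto.
Qed.

(** * Simulating a nominal step by a CRS step *)

Lemma bindp_map_In (f : atom -> atom) (g : atom -> mterm) L y : Injective f ->
  In y L -> bindp (map f L) (map g L) (f y) = g y.
Proof.
  intros Hinj. induction L as [|x L IH]; simpl; [intros []|]. intros [->|H].
  - now rewrite Nat.eqb_refl.
  - destruct (Nat.eqb_spec (f y) (f x)) as [E|E]; auto.
Qed.

Lemma bindp_map_notIn (f : atom -> atom) (g : atom -> mterm) L y : Injective f ->
  ~ In y L -> bindp (map f L) (map g L) (f y) = MVar (f y).
Proof.
  intros Hinj. induction L as [|x L IH]; simpl; auto. intros H.
  destruct (Nat.eqb_spec (f y) (f x)) as [E|E]; auto.
  apply Hinj in E as ->. tauto.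
Qed.

Lemma bindp_MVar ps us z : (forall u, In u us -> exists w, u = MVar w) ->
  exists w, bindp ps us z = MVar w.
Proof.
  revert us; induction ps as [|p ps IH]; intros us H; simpl; eauto.
  destruct us as [|u us]; eauto. simpl in H. destruct (z =? p); eauto.
Qed.

Lemma debruijn_valuate_susp sigma theta D top X B p E E' E0 env n :
  represents sigma theta D top -> In (B, p) (var_occs X [] top) ->
  (forall c, In c (xs D (Lambda top X) p X) ->
     exists z, env (act p c) = MVar z /\ dvar E DFree (act p c) = dvar E' DFree z) ->
  (forall z, In z (matoms (snd (sigma X))) -> dvar E' DFree z = dvar E0 DFree z) ->
  (forall x, ~ In x B -> dvar E DFree x = dvar E0 DFree x) ->
  debruijn n E DFree (embed (pact p (theta X))) =
  debruijn n E' DFree (mapp sigma env (Tr (Lambda top) D (Susp p X))).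
Proof.
  intros Hrep Ho Henv Hsig Hout.
  destruct (Hrep X B p Ho) as (p0 & Hs & Hy).
  set (Sc := xs D (Lambda top X) p X) in *.
  simpl. fold Sc. rewrite Hs in Hsig |- *. simpl in Hsig |- *. rewrite map_map. simpl.
  set (w := embed (theta X)).
  set (rho := bindp (map (act p0) Sc) (map (fun c => env (act p c)) Sc)).
  assert (Hrho : forall y, exists z, rho y = MVar z).
  { intros y. apply bindp_MVar. intros u (c & <- & Hc)%in_map_iff.
    destruct (Henv c Hc) as (z & Hz & _). eauto. }
  set (h1 := fun y => match rho y with MVar z => dvar E' DFree z | _ => DFree y end).
  set (h2 := fun y => dvar E DFree (act p y)).
  transitivity (debruijn n [] h2 w).
  { rewrite embed_pact. now apply debruijn_mrename; [apply act_inj|]. }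
  transitivity (debruijn n [] h1 (mrename (act p0) w)).
  { symmetry. apply debruijn_mrename; [apply act_inj|]. intros y Hyf.
    unfold dvar, h1, h2, rho; simpl. destruct (in_dec Nat.eq_dec y Sc) as [Hin|Hn].
    - rewrite bindp_map_In by (auto; apply act_inj).
      destruct (Henv y Hin) as (z & -> & Hd). now symmetry.
    - rewrite bindp_map_notIn by (auto; apply act_inj).
      destruct (Hy y Hyf Hn) as [HB Hp].
      rewrite Hsig, Hout, Hp; auto.
      rewrite embed_pact. now apply matoms_mrename, mfree_matoms. }
  rewrite embed_pact. apply debruijn_msubst. intros y _.
  destruct (Hrho y) as (z & Hz). exists z. split; auto.
  unfold dvar at 1, h1. simpl. now rewrite Hz.
Qed.

Definition meta_atoms (sigma : valuation) (t : mterm) : list atom :=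
  flat_map (fun Z => fst (sigma Z) ++ matoms (snd (sigma Z))) (metas t).

(* [E] names the binders of the nominal side, [E'] those of the CRS side
   (renamed by [mapp]), related through [env]; [E0] is the environment of
   [top] itself, which both sides agree with outside the binders [B]. *)
Lemma debruijn_tsub_valuate sigma theta D top : represents sigma theta D top ->
  forall u B E E' E0 env n,
  (forall X B' p, In (B', p) (var_occs X B u) -> In (B', p) (var_occs X [] top)) ->
  (forall x, In x (matoms (Tr (Lambda top) D u)) ->
     exists z, env x = MVar z /\ dvar E DFree x = dvar E' DFree z) ->
  (forall z, In z (meta_atoms sigma (Tr (Lambda top) D u)) ->
     dvar E' DFree z = dvar E0 DFree z) ->
  (forall x, ~ In x B -> dvar E DFree x = dvar E0 DFree x) ->
  debruijn n E DFree (embed (tsub theta u)) =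
  debruijn n E' DFree (mapp sigma env (Tr (Lambda top) D u)).
Proof.
  intros Hrep u. induction u using term_nested_ind;
    intros B E E' E0 env n Hocc Henv Hsig Hout.
  - simpl in *. destruct (Henv a) as (z & -> & Hd); auto.
  - apply (debruijn_valuate_susp _ _ _ _ _ B _ _ _ E0); auto.
    + apply Hocc. simpl. rewrite Nat.eqb_refl. simpl; auto.
    + intros c Hc. apply Henv. simpl. apply in_flat_map. exists (MVar (act p c)).
      split; [apply in_map_iff; eauto|simpl; auto].
    + intros z Hz. apply Hsig. unfold meta_atoms. simpl.
      apply in_or_app. left. apply in_or_app. auto.
  - simpl in *. f_equal. set (b := fresh_for _).
    apply (IHu (a :: B) _ _ E0).
    + intros X B' p Hp. apply Hocc. simpl. auto.
    + intros x Hx. destruct (Nat.eq_dec x a) as [->|Nxa].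
      * rewrite Nat.eqb_refl. exists b. split; auto. now rewrite !dvar_hd.
      * apply Nat.eqb_neq in Nxa as Nxa'. rewrite Nxa'.
        destruct (Henv x (or_intror Hx)) as (z & Hz & Hd). exists z. split; auto.
        rewrite !dvar_tl; auto. apply fresh_for_not_In.
        apply in_or_app. right. apply in_or_app. left.
        apply in_flat_map. exists x. rewrite Hz. simpl. auto.
    + intros z Hz. rewrite dvar_tl; auto. apply fresh_for_not_In.
      apply in_or_app. right. apply in_or_app. right. exact Hz.
    + intros x Hx. rewrite dvar_tl; [apply Hout; simpl in Hx; tauto|].
      intros ->. apply Hx. simpl; auto.
  - simpl in *. f_equal. eauto.
  - simpl in *. f_equal. rewrite !map_map. apply map_ext_in. intros u Hu.
    rewrite Forall_forall in H. apply (H u Hu B E E' E0 env n); auto.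
    + intros X B' p Hp. apply Hocc. apply in_flat_map. eauto.
    + intros x Hx. apply Henv. apply in_flat_map. exists (Tr (Lambda top) D u).
      split; auto. apply in_map; auto.
    + intros z Hz. apply Hsig. unfold meta_atoms in *. simpl.
      apply in_flat_map in Hz as (Z & HZ & Hz). apply in_flat_map. exists Z. split; auto.
      apply in_flat_map. exists (Tr (Lambda top) D u). split; auto. apply in_map; auto.
Qed.

Lemma debruijn_tsub_valuate_T sigma theta D top : represents sigma theta D top ->
  forall n E, debruijn n E DFree (embed (tsub theta top)) =
              debruijn n E DFree (valuate sigma (T D top)).
Proof.
  intros Hrep n E. apply (debruijn_tsub_valuate _ _ _ _ Hrep top [] E E E); auto.
  intros x _. eauto.
Qed.

Lemma meta_arities_Tr Lam D u : forall B Z k, In (Z, k) (meta_arities (Tr Lam D u)) ->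
  exists B' p, In (B', p) (var_occs Z B u) /\ k = length (xs D (Lam Z) p Z).
Proof.
  induction u using term_nested_ind; intros B Z k Hk; simpl in *; try tauto; eauto.
  - destruct Hk as [[= <- <-]|Hk].
    + exists B, p. rewrite Nat.eqb_refl, length_map. simpl; auto.
    + apply in_flat_map in Hk as (u & (c & <- & _)%in_map_iff & []).
  - apply in_flat_map in Hk as (v & (u & <- & Hu)%in_map_iff & Hk).
    rewrite Forall_forall in H. destruct (H u Hu B Z k Hk) as (B' & p & Ho & ->).
    exists B', p. split; auto. apply in_flat_map. eauto.
Qed.

Lemma valuation_ok_valuation_of D l r theta : closed D (Tup [l; r]) ->
  (forall X, In X (vars r) -> In X (vars l)) ->
  (forall a X, In (a, X) D -> fresh [] a (theta X)) ->
  valuation_ok (valuation_of D l theta) (T D l) (T D r).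
Proof.
  intros Hcl Hv Hfr. split.
  - intros Z. split; [apply is_term_embed|]. simpl.
    apply Injective_map_NoDup; [apply act_inj|]. apply NoDup_filter, seq_NoDup.
  - assert (Harity : forall top Z k, top = l \/ top = r ->
              In (Z, k) (meta_arities (T D top)) ->
              k = length (fst (valuation_of D l theta Z))).
    { intros top Z k Htop (B & p & Ho & ->)%(meta_arities_Tr _ _ _ []).
      destruct (represents_valuation_of D l r theta top Hcl Hv Hfr Htop Z B p Ho)
        as (p0 & -> & _).
      simpl. now rewrite length_map. }
    intros Z k [Hk|Hk]%in_app_or; [apply (Harity l)|apply (Harity r)]; auto.
Qed.

Lemma nom_step_crs_step R : (forall rho, R rho -> standard_rule rho) -> equivariant R ->
  forall s t, nom_step R s t -> crs_step (crs_of R) (embed s) (embed t).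
Proof.
  intros HR Heqv s t (_ & _ & rho & p & C & s' & theta & HRr & -> & Hfr & Hl & Hr).
  set (rho' := perm_rule p rho) in *.
  assert (HR' : R rho') by now apply Heqv.
  destruct (HR _ HR') as (Hv & _ & Hcl & _).
  set (sigma := valuation_of (nabla rho') (lhs rho') theta).
  assert (Hinst : forall top, top = lhs rho' \/ top = rhs rho' -> forall n E,
            debruijn n E DFree (embed (tsub theta top)) =
            debruijn n E DFree (valuate sigma (T (nabla rho') top)))
    by (intros; apply debruijn_tsub_valuate_T;
        apply (represents_valuation_of _ _ (rhs rho')); auto).
  split; [apply is_term_embed|]. split; [apply is_term_embed|].
  exists (T (nabla rho') (lhs rho')), (T (nabla rho') (rhs rho')), (embed_ctx C), sigma.
  split; [now exists rho'|]. split; [now apply valuation_ok_valuation_of|]. split.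
  - rewrite embed_plug. apply debruijn_maeq, debruijn_mplug. intros n E.
    rewrite <- (aeq_debruijn _ _ Hl). auto.
  - apply debruijn_maeq. rewrite <- (aeq_debruijn _ _ Hr), embed_plug.
    apply debruijn_mplug. auto.
Qed.

Theorem mainTheorem2 (R : nrule -> Prop) :
  (forall rho, R rho -> standard_rule rho) ->
  equivariant R ->
  terminating (crs_step (crs_of R)) ->
  terminating (nom_step R).
Proof.
  intros HR Heqv Hterm [f Hf]. apply Hterm.
  exists (fun n => embed (f n)). intros n.
  now apply nom_step_crs_step.
Qed.
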